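(* Let $\mathcal{X}\subset\mathbb{R}^d$ and let $X=(X_n)_{n\ge0}$ be the Markov chain on $\mathcal{X}$ given by $X_{n+1}=f_{n+1}(X_n)$, $n=0,1,2,\dots$, where $f_1,f_2,\dots$ are iid copies of a random mapping $f:\mathcal{X}\to\mathcal{X}$ which is almost surely locally Lipschitz. Fix a function $U:\mathcal{X}\to\mathbb{R}_+$ with $\inf_{\mathcal{X}} U>0$, and suppose that the inequality $KW\le W-U$ (pointwise on $\mathcal{X}$) has a non-negative finite solution $W_*$. Define $$V_*(x)=\mathbb{E}_x\Big[\sum_{k=0}^\infty U(X_k)\prod_{l=1}^{k}Df_l(X_{l-1})\Big],\qquad x\in\mathcal{X}.$$ Then $V_*$ is finite and satisfies $KV_*=V_*-U$ on $\mathcal{X}$. Furthermore, the equation $KV=V-U$ has at most one bounded solution.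
   Context: $\|\cdot\|$ is the Euclidean norm and $B_\delta(x)=\{x':\|x'-x\|<\delta\}$. For a locally Lipschitz map $g$, its local Lipschitz constant at $x$ is $Dg(x)=\lim_{\delta\to0}\sup_{x',x''\in B_\delta(x)}\frac{\|g(x')-g(x'')\|}{\|x'-x''\|}$. For a function $V:\mathcal{X}\to\mathbb{R}_+$, the operator $K$ is defined by $KV(x)=\mathbb{E}\,[Df(x)\,V(f(x))]$. $\mathbb{E}_x$ denotes expectation conditional on $X_0=x$, and the empty product (for $k=0$) equals $1$. Functions $V$ considered as solutions of $KV=V-U$ are non-negative functions on $\mathcal{X}$. *)

From HB Require Import structures.
From mathcomp Require Import all_boot all_order all_algebra.
From mathcomp Require Import all_classical all_reals all_analysis measurable_realfun.
Set Implicit Arguments. Unset Strict Implicit. Unset Printing Implicit Defensive.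
Import Order.TTheory GRing.Theory Num.Theory.
Local Open Scope classical_set_scope.
Local Open Scope ring_scope.

(* Points of R^d are represented as d-tuples of reals; the library equips
   [d.-tuple R] with the product (= Borel) sigma-algebra. *)

Definition edist {R : realType} {d : nat} (x y : d.-tuple R) : R :=
  Num.sqrt (\sum_(i < d) (tnth x i - tnth y i) ^+ 2).

Definition lip_ratios {R : realType} {d : nat} (X : set (d.-tuple R))
  (g : d.-tuple R -> d.-tuple R) (x : d.-tuple R) (delta : R) : set (\bar R) :=
  [set r | exists y z, [/\ X y, X z, edist y x < delta, edist z x < delta &
      y <> z] /\ r = (edist (g y) (g z) / edist y z)%:E].

(* Local Lipschitz constant Dg(x) = lim_{delta -> 0} sup_{x',x'' in B_delta(x)} ...
   The sup is nonincreasing in delta, so the limit is the infimum over delta > 0.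
   (sup of the empty set is taken to be 0; values lie in [0, +oo].) *)
Definition Dloc {R : realType} {d : nat} (X : set (d.-tuple R))
  (g : d.-tuple R -> d.-tuple R) (x : d.-tuple R) : \bar R :=
  ereal_inf [set ereal_sup (0%E |` lip_ratios X g x delta) | delta in [set e : R | 0 < e]].

Definition loc_lipschitz {R : realType} {d : nat} (X : set (d.-tuple R))
  (g : d.-tuple R -> d.-tuple R) : Prop :=
  forall x, X x -> exists2 delta : R, 0 < delta & exists L : R,
    forall y z, X y -> X z -> edist y x < delta -> edist z x < delta ->
      edist (g y) (g z) <= L * edist y z.

Definition Kop {R : realType} {d : nat} {dT : measure_display} {Theta : measurableType dT}
  (mu : probability Theta R) (X : set (d.-tuple R))
  (F : Theta -> d.-tuple R -> d.-tuple R) (V : d.-tuple R -> \bar R)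
  (x : d.-tuple R) : \bar R :=
  (\int[mu]_t (Dloc X (F t) x * V (F t x)))%E.

Definition iid_seq {R : realType} {dO dT : measure_display}
  {Omega : measurableType dO} {Theta : measurableType dT}
  (P : probability Omega R) (mu : probability Theta R)
  (theta : nat -> Omega -> Theta) : Prop :=
  [/\ (forall n, measurable_fun setT (theta n)),
      (forall n (A : set Theta), measurable A -> P (theta n @^-1` A) = mu A) &
      (forall (I : seq nat) (A : nat -> set Theta), uniq I ->
         (forall i, measurable (A i)) ->
         P (\bigcap_(i in [set` I]) (theta i @^-1` A i)) =
         (\prod_(i <- I) P (theta i @^-1` A i))%E)].

(* The Markov chain X_0 = x, X_{n+1} = f_{n+1}(X_n) with f_{n+1} = F (theta n). *)
Fixpoint chain {d : nat} {R : realType} {Omega Theta : Type}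
  (F : Theta -> d.-tuple R -> d.-tuple R) (theta : nat -> Omega -> Theta)
  (x : d.-tuple R) (n : nat) (w : Omega) : d.-tuple R :=
  match n with
  | 0 => x
  | n.+1 => F (theta n w) (chain F theta x n w)
  end.

Definition Vstar {R : realType} {d : nat} {dO dT : measure_display}
  {Omega : measurableType dO} {Theta : measurableType dT}
  (P : probability Omega R) (X : set (d.-tuple R))
  (F : Theta -> d.-tuple R -> d.-tuple R) (theta : nat -> Omega -> Theta)
  (U : d.-tuple R -> R) (x : d.-tuple R) : \bar R :=
  (\int[P]_w (\sum_(k <oo)
     ((U (chain F theta x k w))%:E *
      \prod_(l < k) Dloc X (F (theta l w)) (chain F theta x l w))))%E.

From HB Require Import structures.
From mathcomp Require Import all_boot all_order all_algebra.
From mathcomp Require Import all_classical all_reals all_analysis measurable_realfun.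
From mathcomp Require Import lra.
Import Order.TTheory GRing.Theory Num.Theory.
Set Implicit Arguments.
Unset Strict Implicit.
Unset Printing Implicit Defensive.
Local Open Scope classical_set_scope.
Local Open Scope ring_scope.

(* Since f_{k+1} is independent of X_0, ..., X_k, the Markov property gives
   E_x[U(X_k) prod_{l <= k} Df_l(X_{l-1})] = K^k U(x), so V_* = sum_k K^k U.
   Iterating K W_* <= W_* - U bounds every partial sum by W_*, hence V_* <= W_*,
   and applying K term by term (monotone convergence) gives K V_* = V_* - U.
   For uniqueness, h = (V_1 - V_2)^+ satisfies h <= K h and h <= a U for some
   a >= 0, since V_1 is bounded and U >= c > 0.  Then n h <= a W_* for every n,
   by induction through K (n h) <= a K W_* <= a (W_* - U) and h <= a U; so h = 0. *)

Lemma ge0_nneseriesZl (R : realType) (a : \bar R) (f : nat -> \bar R) :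
  (0 <= a)%E -> (forall k, 0 <= f k)%E ->
  (\sum_(k <oo) (a * f k) = a * \sum_(k <oo) f k)%E.
Proof.
move=> a0 f0; case: a a0 => [r _|_|//]; first by apply: nneseriesZl => i _; exact: f0.
have term_le (g : nat -> \bar R) k :
    (forall i, 0 <= g i)%E -> (g k <= \sum_(i <oo) g i)%E.
  move=> g0; rewrite (@nneseriesD1 _ g k xpredT) //; apply: leeDl.
  by apply: nneseries_ge0 => i _ _; exact: g0.
have [f_eq0|/existsNP[k /eqP fk_neq0]] := pselect (forall k, f k = 0%E); last first.
  have fk_gt0 : (0 < f k)%E by rewrite lt0e fk_neq0 f0.
  rewrite gt0_mulye; last exact: lt_le_trans fk_gt0 (term_le _ _ f0).
  apply/eqP; rewrite eq_le leey /= -[X in (X <= _)%E](gt0_mulye fk_gt0).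
  by apply: (term_le (fun i => +oo * f i)%E) => i; rewrite mule_ge0.
rewrite [X in (_ = _ * X)%E]eseries0 => [|i _ _]; last exact: f_eq0.
by rewrite mule0; apply: eseries0 => i _ _; rewrite f_eq0 mule0.
Qed.

Lemma Dloc_ge0 (R : realType) (d : nat) (X : set (d.-tuple R)) g x :
  (0 <= Dloc X g x)%E.
Proof. by apply/ereal_infP => _ [e _ <-]; apply: ereal_sup_ubound; left. Qed.

Section transfer_operator.
Context (R : realType) (d : nat) (dT : measure_display) (Theta : measurableType dT)
  (mu : probability Theta R) (X : set (d.-tuple R))
  (F : Theta -> d.-tuple R -> d.-tuple R).
Hypothesis F_meas : measurable_fun setT (fun p : Theta * d.-tuple R => F p.1 p.2).
Hypothesis Dloc_meas : measurable_fun setT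
  ((fun p : Theta * d.-tuple R => Dloc X (F p.1) p.2) : _ -> \bar R).
Hypothesis F_in : forall t x, X x -> X (F t x).

Local Notation T := (d.-tuple R).
Local Notation K := (Kop mu X F).
Local Notation Df t x := (Dloc X (F t) x).

Lemma measurable_Kop_integrand (phi : T -> \bar R) : measurable_fun setT phi ->
  measurable_fun setT (fun p : Theta * T => Df p.1 p.2 * phi (F p.1 p.2))%E.
Proof.
by move=> mphi; apply: emeasurable_funM => //; exact: measurableT_comp mphi F_meas.
Qed.

Lemma measurable_Kop_integrand_at (phi : T -> \bar R) x : measurable_fun setT phi ->
  measurable_fun setT (fun t => Df t x * phi (F t x))%E.
Proof.
move=> mphi; have mpair : measurable_fun setT (fun t : Theta => (t, x)).
  by apply: measurable_fun_pair => //; exact: measurable_cst.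
exact: measurableT_comp (measurable_Kop_integrand mphi) mpair.
Qed.

Lemma Kop_ge0 phi x : (forall y, 0 <= phi y)%E -> (0 <= K phi x)%E.
Proof. by move=> phi0; apply: integral_ge0 => t _; rewrite mule_ge0 ?Dloc_ge0. Qed.

Lemma measurable_Kop phi : measurable_fun setT phi -> (forall y, 0 <= phi y)%E ->
  measurable_fun setT (K phi).
Proof.
move=> mphi phi0.
apply: (@measurable_fun_fubini_tonelli_G _ _ _ _ _ mu _
  (measurable_Kop_integrand mphi)).
by move=> p; rewrite mule_ge0 ?Dloc_ge0.
Qed.

Lemma iter_Kop_ge0 n phi y : (forall y, 0 <= phi y)%E -> (0 <= iter n K phi y)%E.
Proof. by elim: n y => [|n IH] y phi0 //=; apply: Kop_ge0 => z; exact: IH. Qed.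

Lemma measurable_iter_Kop n phi : measurable_fun setT phi -> (forall y, 0 <= phi y)%E ->
  measurable_fun setT (iter n K phi).
Proof.
move=> mphi phi0; elim: n => [//|n IH] /=.
by apply: measurable_Kop IH _ => y; exact: iter_Kop_ge0.
Qed.

Lemma ge0_le_Kop phi psi x : measurable_fun setT phi -> measurable_fun setT psi ->
  (forall y, X y -> 0 <= phi y <= psi y)%E -> X x -> (K phi x <= K psi x)%E.
Proof.
move=> mphi mpsi phi_psi Xx; apply: ge0_le_integral => //.
- by move=> t _; rewrite mule_ge0 ?Dloc_ge0 //; case/andP: (phi_psi _ (F_in t Xx)).
- exact: measurable_Kop_integrand_at.
- exact: measurable_Kop_integrand_at.
- by move=> t _; rewrite lee_wpmul2l ?Dloc_ge0 //; case/andP: (phi_psi _ (F_in t Xx)).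
Qed.

Lemma KopZl (a : \bar R) phi x : measurable_fun setT phi ->
  (forall y, X y -> 0 <= phi y)%E -> (0 <= a)%E -> X x ->
  K (fun y => a * phi y)%E x = (a * K phi x)%E.
Proof.
move=> mphi phi0 a0 Xx; have FX t : X (F t x) := F_in t Xx.
rewrite /Kop -ge0_integralZl //.
- by apply: eq_integral => t _; rewrite muleCA.
- exact: measurable_Kop_integrand_at.
- by move=> t _; rewrite mule_ge0 ?Dloc_ge0 ?phi0.
Qed.

Lemma KopD phi psi x : measurable_fun setT phi -> measurable_fun setT psi ->
  (forall y, X y -> 0 <= phi y)%E -> (forall y, X y -> 0 <= psi y)%E -> X x ->
  K (fun y => phi y + psi y)%E x = (K phi x + K psi x)%E.
Proof.
move=> mphi mpsi phi0 psi0 Xx; have FX t : X (F t x) := F_in t Xx.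
rewrite /Kop -ge0_integralD //.
- by apply: eq_integral => t _; rewrite ge0_muleDr ?phi0 ?psi0.
- by move=> t _; rewrite mule_ge0 ?Dloc_ge0 ?phi0.
- exact: measurable_Kop_integrand_at.
- by move=> t _; rewrite mule_ge0 ?Dloc_ge0 ?psi0.
- exact: measurable_Kop_integrand_at.
Qed.

Lemma Kop_sum (I : Type) (s : seq I) (phi : I -> T -> \bar R) x :
  (forall i, measurable_fun setT (phi i)) ->
  (forall i y, X y -> 0 <= phi i y)%E -> X x ->
  K (fun y => \sum_(i <- s) phi i y)%E x = (\sum_(i <- s) K (phi i) x)%E.
Proof.
move=> mphi phi0 Xx; have FX t : X (F t x) := F_in t Xx.
rewrite /Kop -ge0_integral_sum //.
- by apply: eq_integral => t _; rewrite ge0_sume_distrr // => i _; rewrite phi0.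
- by move=> i; exact: measurable_Kop_integrand_at.
- by move=> i t _; rewrite mule_ge0 ?Dloc_ge0 ?phi0.
Qed.

Lemma Kop_nneseries (phi : nat -> T -> \bar R) x :
  (forall k, measurable_fun setT (phi k)) ->
  (forall k y, X y -> 0 <= phi k y)%E -> X x ->
  K (fun y => \sum_(k <oo) phi k y)%E x = (\sum_(k <oo) K (phi k) x)%E.
Proof.
move=> mphi phi0 Xx; have FX t : X (F t x) := F_in t Xx.
rewrite /Kop -integral_nneseries //.
- by apply: eq_integral => t _; rewrite ge0_nneseriesZl ?Dloc_ge0 // => k; rewrite phi0.
- by move=> k; exact: measurable_Kop_integrand_at.
- by move=> k t _; rewrite mule_ge0 ?Dloc_ge0 ?phi0.
Qed.

Lemma diff_solutions_subharmonic (U V1 V2 : T -> R) :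
  measurable_fun setT V1 -> measurable_fun setT V2 ->
  (forall x, X x -> 0 <= V1 x) -> (forall x, X x -> 0 <= V2 x) ->
  (forall x, X x -> K (fun y => (V1 y)%:E) x = (V1 x - U x)%:E) ->
  (forall x, X x -> K (fun y => (V2 y)%:E) x = (V2 x - U x)%:E) ->
  forall x, X x ->
  ((Num.max (V1 x - V2 x) 0)%:E <= K (fun y => (Num.max (V1 y - V2 y) 0)%:E) x)%E.
Proof.
move=> mV1 mV2 V1_ge0 V2_ge0 KV1 KV2 x Xx.
have mE (V : T -> R) : measurable_fun setT V -> measurable_fun setT (fun y => (V y)%:E).
  by move=> mV; exact/measurable_EFinP.
have mh : measurable_fun setT (fun y => Num.max (V1 y - V2 y) 0).
  by apply: measurable_maxr; [exact: measurable_funB|exact: measurable_cst].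
have hE_ge0 y : X y -> (0 <= (Num.max (V1 y - V2 y) 0)%:E)%E.
  by rewrite lee_fin le_max lexx orbT.
have V2E_ge0 y : X y -> (0 <= (V2 y)%:E)%E by move=> Xy; rewrite lee_fin V2_ge0.
have Kh_ge0 : (0 <= K (fun y => (Num.max (V1 y - V2 y) 0)%:E) x)%E.
  by apply: Kop_ge0 => y; rewrite lee_fin le_max lexx orbT.
have [//|V21] := leP (V1 x - V2 x) 0.
have : ((V1 x - U x)%:E <=
    (V2 x - U x)%:E + K (fun y => (Num.max (V1 y - V2 y) 0)%:E) x)%E.
  rewrite -KV1 // -KV2 // -(KopD (mE _ mV2) (mE _ mh) V2E_ge0 hE_ge0 Xx).
  apply: ge0_le_Kop => //; [exact: mE|by apply: emeasurable_funD; exact: mE|].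
  by move=> y Xy; rewrite -EFinD !lee_fin V1_ge0 // -lerBlDl le_max lexx.
case: (K _ x) Kh_ge0 => [r _|_ _|//]; last by rewrite leey.
by rewrite -EFinD !lee_fin => ?; lra.
Qed.

Section comparison.
Variables (U W : T -> R).
Hypothesis W_meas : measurable_fun setT W.
Hypothesis W_ge0 : forall x, X x -> 0 <= W x.
Hypothesis KW_le : forall x, X x -> (K (fun y => (W y)%:E) x <= (W x - U x)%:E)%E.

Section subharmonic.
Variables (h : T -> R) (a : R).
Hypothesis h_meas : measurable_fun setT h.
Hypothesis h_ge0 : forall y, 0 <= h y.
Hypothesis a_ge0 : 0 <= a.
Hypothesis h_le_aU : forall x, X x -> h x <= a * U x.
Hypothesis h_le_Kh : forall x, X x -> ((h x)%:E <= K (fun y => (h y)%:E) x)%E.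

Lemma subharmonic_mulrn_le n y : X y -> h y *+ n <= a * W y.
Proof.
have mhE : measurable_fun setT (fun y => (h y)%:E) by exact/measurable_EFinP.
have mWE : measurable_fun setT (fun y => (W y)%:E) by exact/measurable_EFinP.
have hE0 y' : X y' -> (0 <= (h y')%:E)%E by rewrite lee_fin.
have WE0 y' : X y' -> (0 <= (W y')%:E)%E by move=> Xy; rewrite lee_fin W_ge0.
have aE0 : (0 <= a%:E)%E by rewrite lee_fin.
elim: n y => [|n IH] y Xy; first by rewrite mulr0n mulr_ge0 ?W_ge0.
have nE0 : (0 <= n%:R%:E :> \bar R)%E by rewrite lee_fin.
have nKh_le : (n%:R%:E * K (fun y => (h y)%:E) y <= (a * (W y - U y))%:E)%E.
  rewrite -(KopZl mhE hE0 nE0 Xy) EFinM.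
  apply: le_trans (lee_wpmul2l aE0 (KW_le Xy)).
  rewrite -(KopZl mWE WE0 aE0 Xy); apply: ge0_le_Kop => //.
  - by apply: emeasurable_funM => //; exact: measurable_cst.
  - by apply: emeasurable_funM => //; exact: measurable_cst.
  - by move=> z Xz; rewrite -!EFinM !lee_fin mulr_ge0 // mulr_natl IH.
rewrite mulrSr -lee_fin EFinD.
apply: (@le_trans _ _ (n%:R%:E * K (fun y => (h y)%:E) y + (h y)%:E)%E).
  apply: leeD2r; rewrite -[h y *+ n]mulr_natl EFinM.
  by apply: lee_wpmul2l => //; exact: h_le_Kh.
apply: le_trans (leeD nKh_le (_ : (h y)%:E <= (a * U y)%:E)%E) _.
  by rewrite lee_fin h_le_aU.
by rewrite -EFinD lee_fin -mulrDr subrK.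
Qed.

Lemma subharmonic_eq0 x : X x -> h x = 0.
Proof.
move=> Xx; apply/le_anti; rewrite h_ge0 andbT leNgt; apply/negP => hx_gt0.
have := subharmonic_mulrn_le (Num.trunc (a * W x / h x)).+1 Xx.
rewrite -mulr_natl -ler_pdivlMr // => /(lt_le_trans (truncnS_gt _)).
by rewrite ltxx.
Qed.
End subharmonic.

Lemma bounded_solution_le (c M : R) (V1 V2 : T -> R) :
  0 < c -> (forall x, X x -> c <= U x) ->
  measurable_fun setT V1 -> measurable_fun setT V2 ->
  (forall x, X x -> 0 <= V1 x) -> (forall x, X x -> V1 x <= M) ->
  (forall x, X x -> 0 <= V2 x) ->
  (forall x, X x -> K (fun y => (V1 y)%:E) x = (V1 x - U x)%:E) ->
  (forall x, X x -> K (fun y => (V2 y)%:E) x = (V2 x - U x)%:E) ->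
  forall x, X x -> V1 x <= V2 x.
Proof.
move=> c_gt0 c_le_U mV1 mV2 V1_ge0 V1_le V2_ge0 KV1 KV2 x Xx.
pose h y := Num.max (V1 y - V2 y) 0.
have mh : measurable_fun setT h.
  by apply: measurable_maxr; [exact: measurable_funB|exact: measurable_cst].
have h_ge0 y : 0 <= h y by rewrite le_max lexx orbT.
have a_ge0 : 0 <= Num.max M 0 / c by rewrite divr_ge0 ?le_max ?lexx ?orbT ?ltW.
have h_le_aU y : X y -> h y <= Num.max M 0 / c * U y.
  move=> Xy; have V1y_le := V1_le y Xy; have V2y_ge0 := V2_ge0 y Xy.
  apply: (@le_trans _ _ (Num.max M 0)).
    by rewrite ge_max !le_max lexx !orbT andbT; apply/orP; left; lra.
  by rewrite mulrAC ler_pdivlMr // ler_wpM2l ?c_le_U // le_max lexx orbT.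
have h_le_Kh := diff_solutions_subharmonic mV1 mV2 V1_ge0 V2_ge0 KV1 KV2.
rewrite -subr_le0 -[leRHS](subharmonic_eq0 mh h_ge0 a_ge0 h_le_aU h_le_Kh Xx).
by rewrite le_max lexx.
Qed.
End comparison.
End transfer_operator.

Section iid_sequence.
Context (R : realType) (dO dT : measure_display) (Omega : measurableType dO)
  (Theta : measurableType dT) (P : probability Omega R) (mu : probability Theta R)
  (theta : nat -> Omega -> Theta).
Hypothesis theta_iid : iid_seq P mu theta.

Let theta_meas n : measurable_fun setT (theta n).
Proof. by case: theta_iid. Qed.

Let theta_law n A : measurable A -> P (theta n @^-1` A) = mu A.
Proof. by case: theta_iid => _ law _; exact: law. Qed.

Let measurable_theta_preimage n A : measurable A -> measurable (theta n @^-1` A).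
Proof. by move=> mA; rewrite -[X in measurable X]setTI; exact: theta_meas. Qed.

Definition cylinder n (A : nat -> set Theta) : set Omega :=
  \bigcap_(i in `I_n) theta i @^-1` A i.

Definition cylinders n : set (set Omega) :=
  [set cylinder n A | A in [set A | forall i, measurable (A i)]].

Definition past n : set (set Omega) := <<s cylinders n >>.

Local Notation pastT n := (g_sigma_algebraType (cylinders n)).

Variables (d' : measure_display) (T' : measurableType d').

Lemma cylinder0 A : cylinder 0 A = setT.
Proof. by apply/seteqP; split => // w _ i. Qed.

Lemma cylinderS n A : cylinder n.+1 A = cylinder n A `&` theta n @^-1` A n.
Proof.
apply/seteqP; split => w.
  by move=> Aw; split => [i i_lt|]; apply: Aw; rewrite /= ltnS // ltnW.
move=> [Aw Anw] i /=; rewrite ltnS leq_eqVlt => /orP[/eqP -> //|i_lt].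
exact: Aw.
Qed.

Lemma eq_cylinder n A B : (forall i, (i < n)%N -> A i = B i) ->
  cylinder n A = cylinder n B.
Proof. by move=> AB; apply: eq_bigcapr => i /AB ->. Qed.

Lemma measurable_cylinder n A : (forall i, measurable (A i)) ->
  measurable (cylinder n A).
Proof.
move=> mA; elim: n => [|n IH]; first by rewrite cylinder0.
by rewrite cylinderS; apply: measurableI => //; exact: measurable_theta_preimage.
Qed.

Lemma cylinders_setI_closed n : setI_closed (cylinders n).
Proof.
move=> _ _ [A mA <-] [B mB <-]; exists (fun i => A i `&` B i).
  by move=> i; exact: measurableI.
apply/seteqP; split => w /=.
  by move=> ABw; split => i /ABw [].
by move=> [Aw Bw] i i_lt; split; [exact: Aw|exact: Bw].
Qed.

Lemma cylinders_setT n : cylinders n setT.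
Proof. by exists (fun=> setT) => //; apply/seteqP; split. Qed.

Lemma cylinders_preimage n i B : (i < n)%N -> measurable B ->
  cylinders n (theta i @^-1` B).
Proof.
move=> i_lt mB; exists (fun j => if j == i then B else setT).
  by move=> j; case: ifP.
apply/seteqP; split => w /=; first by move=> /(_ i i_lt); rewrite eqxx.
by move=> Bw j _; case: eqP => // ->.
Qed.

Lemma cylinders_subS n : cylinders n `<=` cylinders n.+1.
Proof.
move=> _ [A mA <-]; exists (fun i => if i == n then setT else A i).
  by move=> i; case: ifP.
rewrite cylinderS eqxx preimage_setT setIT.
by apply: eq_cylinder => i i_lt; rewrite ltn_eqF.
Qed.

Lemma past_measurable n : past n `<=` measurable.
Proof.
apply: smallest_sub; first exact: sigma_algebra_measurable.
by move=> _ [A mA <-]; exact: measurable_cylinder.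
Qed.

Lemma past_subS n : past n `<=` past n.+1.
Proof.
apply: smallest_sub; first exact: smallest_sigma_algebra.
by move=> S /cylinders_subS; exact: sub_sigma_algebra.
Qed.

Lemma P_cylinder n A : (forall i, measurable (A i)) ->
  P (cylinder n A) = (\prod_(i < n) mu (A i))%E.
Proof.
move=> mA; have [_ _ indep] := theta_iid.
have -> : cylinder n A = \bigcap_(i in [set` iota 0 n]) theta i @^-1` A i.
  by rewrite /cylinder; congr bigcap; apply/seteqP; split => i; rewrite /= mem_iota.
rewrite indep ?iota_uniq // -(big_mkord xpredT (fun i => mu (A i))).
by rewrite /index_iota subn0; apply: eq_bigr => i _; exact: theta_law.
Qed.

Lemma P_setI_cylinder n A B : (forall i, measurable (A i)) -> measurable B ->
  P (cylinder n A `&` theta n @^-1` B) = (mu B * P (cylinder n A))%E.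
Proof.
move=> mA mB; pose AB i := if i == n then B else A i.
have mAB i : measurable (AB i) by rewrite /AB; case: ifP.
have -> : cylinder n A `&` theta n @^-1` B = cylinder n.+1 AB.
  rewrite cylinderS /AB eqxx; congr (_ `&` _).
  by apply: eq_cylinder => i i_lt; rewrite ltn_eqF.
rewrite !P_cylinder // big_ord_recr /= /AB eqxx muleC; congr (_ * _)%E.
by apply: eq_bigr => i _; rewrite ltn_eqF.
Qed.

Lemma P_setI_past n B S : measurable B -> past n S ->
  P (S `&` theta n @^-1` B) = (mu B * P S)%E.
Proof.
move=> mB pastS; pose r : {nonneg R} := NngNum (fine_ge0 (measure_ge0 mu B)).
have muBE : (r%:num%:E = mu B)%E by rewrite /= fineK // fin_num_measure.
have cylinders_meas : cylinders n `<=` measurable.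
  by move=> _ [A mA <-]; exact: measurable_cylinder.
have cover : \bigcup_(k : nat) [set: Omega] = setT.
  by rewrite bigcup_const //; exists 0%N.
rewrite -muBE; apply: (g_sigma_algebra_measure_unique (cylinders n) cylinders_meas
  (fun=> setT) (fun=> @cylinders_setT n) cover
  (mrestr P (@measurable_theta_preimage n B mB)) (mscale r P)
  (@cylinders_setI_closed n) _ _ S pastS).
- move=> _ [A mA <-]; have := P_setI_cylinder n mA mB; rewrite -muBE; exact.
- move=> _; apply: le_lt_trans (probability_le1 _ _) (ltey _).
  by apply: measurableI => //; exact: measurable_theta_preimage.
Qed.

Lemma pastT_preimage n (Y : Omega -> T') : measurable_fun setT (Y : pastT n -> T') ->
  forall B, measurable B -> past n (Y @^-1` B).
Proof. by move=> mY B mB; rewrite -[_ @^-1` _]setTI; exact: mY. Qed.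

Lemma measurable_fun_pastT n (Y : Omega -> T') :
  measurable_fun setT (Y : pastT n -> T') -> measurable_fun setT Y.
Proof.
move=> mY _ B mB; rewrite setTI.
exact: (past_measurable (pastT_preimage mY mB)).
Qed.

Lemma measurable_fun_pastTS n (Y : Omega -> T') :
  measurable_fun setT (Y : pastT n -> T') -> measurable_fun setT (Y : pastT n.+1 -> T').
Proof.
move=> mY _ B mB; rewrite setTI.
exact: (past_subS (pastT_preimage mY mB)).
Qed.

Lemma measurable_theta_pastT n : measurable_fun setT (theta n : pastT n.+1 -> Theta).
Proof.
move=> _ B mB; rewrite setTI.
by apply: sub_sigma_algebra; exact: cylinders_preimage.
Qed.

Lemma integral_past_next n (Y : Omega -> T') (g : Theta * T' -> \bar R) :
  measurable_fun setT (Y : pastT n -> T') ->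
  measurable_fun setT g -> (forall z, 0 <= g z)%E ->
  (\int[P]_w g (theta n w, Y w) = \int[P]_w \int[mu]_t g (t, Y w))%E.
Proof.
move=> mYpast mg g0; have mY := measurable_fun_pastT mYpast.
have mZ : measurable_fun setT (fun w => (theta n w, Y w)).
  exact: measurable_fun_pair (theta_meas n) mY.
pose Ym : {mfun Omega >-> T'} := HB.pack Y (isMeasurableFun.Build _ _ _ _ _ mY).
pose Zm : {mfun Omega >-> (Theta * T')%type} :=
  HB.pack (fun w => (theta n w, Y w)) (isMeasurableFun.Build _ _ _ _ _ mZ).
have law_pair A : measurable A -> (mu \x distribution P Ym)%E A = distribution P Zm A.
  apply: product_measure_unique => B C mB mC.
  change (P ((fun w => (theta n w, Y w)) @^-1` (B `*` C)) = mu B * P (Y @^-1` C))%E.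
  have -> : (fun w => (theta n w, Y w)) @^-1` (B `*` C) = Y @^-1` C `&` theta n @^-1` B.
    by apply/seteqP; split => w [].
  by rewrite P_setI_past //; exact: pastT_preimage.
transitivity (\int[distribution P Zm]_z g z)%E.
  by rewrite ge0_integral_distribution.
transitivity (\int[(mu \x distribution P Ym)%E]_z g z)%E.
  by apply: eq_measure_integral => A mA _; exact/esym/law_pair.
rewrite fubini_tonelli2 // ge0_integral_distribution //.
- exact: measurable_fun_fubini_tonelli_G.
- by move=> y; exact: integral_ge0.
Qed.

End iid_sequence.

Section markov_chain.
Context (R : realType) (d : nat) (dO dT : measure_display) (Omega : measurableType dO)
  (Theta : measurableType dT) (P : probability Omega R) (mu : probability Theta R)
  (theta : nat -> Omega -> Theta) (X : set (d.-tuple R))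
  (F : Theta -> d.-tuple R -> d.-tuple R).
Hypothesis theta_iid : iid_seq P mu theta.
Hypothesis F_meas : measurable_fun setT (fun p : Theta * d.-tuple R => F p.1 p.2).
Hypothesis Dloc_meas : measurable_fun setT
  ((fun p : Theta * d.-tuple R => Dloc X (F p.1) p.2) : _ -> \bar R).
Hypothesis F_in : forall t x, X x -> X (F t x).

Local Notation T := (d.-tuple R).
Local Notation K := (Kop mu X F).
Local Notation Df t x := (Dloc X (F t) x).
Local Notation pastT n := (g_sigma_algebraType (cylinders theta n)).

Let measurable_drop_weight :
  measurable_fun setT (fun z : Theta * (T * \bar R) => (z.1, z.2.1)).
Proof.
apply: measurable_fun_pair; first exact: measurable_fst.
exact: measurableT_comp measurable_fst measurable_snd.
Qed.

Definition chain_weight x n w : \bar R :=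
  (\prod_(l < n) Df (theta l w) (chain F theta x l w))%E.

Lemma chain_weight_ge0 x n w : (0 <= chain_weight x n w)%E.
Proof. by apply: prode_ge0 => l _; exact: Dloc_ge0. Qed.

Lemma chain_in x n w : X x -> X (chain F theta x n w).
Proof. by move=> Xx; elim: n => [//|n IH] /=; exact: F_in. Qed.

Lemma measurable_chain_weight_past x n : measurable_fun setT
  ((fun w => (chain F theta x n w, chain_weight x n w)) : pastT n -> (T * \bar R)%type).
Proof.
elim: n => [|n IH].
  rewrite (_ : (fun w => _) = cst (x, 1%E)); first exact: measurable_cst.
  by apply/funext => w; rewrite /chain_weight big_ord0.
pose step (z : Theta * (T * \bar R)) := (F z.1 z.2.1, z.2.2 * Df z.1 z.2.1)%E.
have mstep : measurable_fun setT step.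
  apply: measurable_fun_pair.
    exact: measurableT_comp F_meas measurable_drop_weight.
  apply: emeasurable_funM; first exact: measurableT_comp measurable_snd measurable_snd.
  exact: measurableT_comp Dloc_meas measurable_drop_weight.
have mtheta : measurable_fun setT (theta n : pastT n.+1 -> Theta).
  exact: measurable_theta_pastT.
have mY := measurable_fun_pastTS IH.
suff -> : ((fun w => (chain F theta x n.+1 w, chain_weight x n.+1 w))
    : pastT n.+1 -> _) =
  step \o (fun w => (theta n w, (chain F theta x n w, chain_weight x n w))).
  exact: measurableT_comp mstep (measurable_fun_pair mtheta mY).
by apply/funext => w; rewrite /step /chain_weight /= big_ord_recr.
Qed.

Lemma integral_chain_weight n phi x :
  measurable_fun setT phi -> (forall y, 0 <= phi y)%E ->
  (\int[P]_w (chain_weight x n w * phi (chain F theta x n w)) = iter n K phi x)%E.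
Proof.
elim: n phi => [|n IH] phi mphi phi0.
  transitivity (\int[P]_w (cst (phi x) w))%E.
    by apply: eq_integral => w _; rewrite /chain_weight big_ord0 mul1e.
  by rewrite integral_cst // -[RHS]mule1; congr (_ * _)%E; exact: probability_setT.
(* The absolute value makes [g] nonnegative on the whole product space. *)
pose g (z : Theta * (T * \bar R)) := (`|z.2.2| * (Df z.1 z.2.1 * phi (F z.1 z.2.1)))%E.
have mg : measurable_fun setT g.
  apply: emeasurable_funM.
    exact: measurableT_comp (@abse_measurable R setT)
      (measurableT_comp measurable_snd measurable_snd).
  exact: measurableT_comp (measurable_Kop_integrand F_meas Dloc_meas mphi)
    measurable_drop_weight.
have g_ge0 z : (0 <= g z)%E by rewrite mule_ge0 // mule_ge0 ?Dloc_ge0.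
transitivity (\int[P]_w g (theta n w, (chain F theta x n w, chain_weight x n w)))%E.
  apply: eq_integral => w _; rewrite /g /chain_weight /= big_ord_recr /=.
  by rewrite gee0_abs ?muleA //; apply: prode_ge0 => l _; exact: Dloc_ge0.
rewrite (integral_past_next theta_iid (@measurable_chain_weight_past x n) mg g_ge0).
transitivity (\int[P]_w (chain_weight x n w * K phi (chain F theta x n w)))%E.
  apply: eq_integral => w _; rewrite /g /= gee0_abs ?chain_weight_ge0 // /Kop.
  rewrite ge0_integralZl ?chain_weight_ge0 //.
  - exact: measurable_Kop_integrand_at.
  - by move=> t _; rewrite mule_ge0 ?Dloc_ge0.
rewrite IH ?iterSr //; first exact: measurable_Kop.
by move=> y; exact: Kop_ge0.
Qed.

Section series_solution.
Variables (U W : T -> R).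
Hypothesis U_meas : measurable_fun setT U.
Hypothesis U_ge0 : forall x, X x -> 0 <= U x.
Hypothesis W_meas : measurable_fun setT W.
Hypothesis W_ge0 : forall x, X x -> 0 <= W x.
Hypothesis KW_le : forall x, X x -> (K (fun y => (W y)%:E) x <= (W x - U x)%:E)%E.

(* [U] may be negative off [X]; its positive part keeps every [K^k u] nonnegative. *)
Let u y : \bar R := (Num.max (U y) 0)%:E.

Let u_ge0 y : (0 <= u y)%E.
Proof. by rewrite lee_fin le_max lexx orbT. Qed.

Let measurable_u : measurable_fun setT u.
Proof.
by apply/measurable_EFinP; apply: measurable_maxr => //; exact: measurable_cst.
Qed.

Let uE y : X y -> u y = (U y)%:E.
Proof. by move=> Xy; rewrite /u (max_idPl (U_ge0 Xy)). Qed.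

Let Ku_ge0 k y : (0 <= iter k K u y)%E.
Proof. exact: iter_Kop_ge0. Qed.

Let measurable_Ku k : measurable_fun setT (iter k K u).
Proof. exact: measurable_iter_Kop. Qed.

Lemma Vstar_series x : X x -> Vstar P X F theta U x = (\sum_(k <oo) iter k K u x)%E.
Proof.
move=> Xx; rewrite /Vstar integral_nneseries //.
- apply: eq_eseriesr => k _; rewrite -integral_chain_weight //.
  by apply: eq_integral => w _; rewrite muleC uE //; exact: chain_in.
- move=> k.
  have mXW := measurable_fun_pastT theta_iid (@measurable_chain_weight_past x k).
  have mUW : measurable_fun setT (fun z : T * \bar R => ((U z.1)%:E * z.2)%E).
    apply: emeasurable_funM; last exact: measurable_snd.
    by apply/measurable_EFinP; exact: measurableT_comp U_meas measurable_fst.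
  exact: measurableT_comp mUW mXW.
- move=> k w _; rewrite mule_ge0 ?chain_weight_ge0 // lee_fin U_ge0 //.
  exact: chain_in.
Qed.

Lemma sum_iter_Kop_le n x : X x -> (\sum_(k < n) iter k K u x <= (W x)%:E)%E.
Proof.
elim: n x => [|n IH] x Xx; first by rewrite big_ord0 lee_fin W_ge0.
rewrite big_ord_recl /=.
under eq_bigr do rewrite add0n.
rewrite -(Kop_sum mu F_meas Dloc_meas F_in _ (fun k : 'I_n => measurable_Ku k)
  (fun k y _ => Ku_ge0 k y) Xx).
rewrite uE //; apply: (@le_trans _ _ ((U x)%:E + K (fun y => (W y)%:E) x)%E).
  apply: leeD2l; apply: ge0_le_Kop => //.
  - by apply: emeasurable_sum => k; exact: measurable_Ku.
  - exact/measurable_EFinP.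
  - by move=> y Xy; rewrite sume_ge0 ?IH // => k _; exact: Ku_ge0.
by apply: le_trans (leeD2l _ (KW_le Xx)) _; rewrite -EFinD addrC subrK.
Qed.

Lemma Vstar_le x : X x -> (Vstar P X F theta U x <= (W x)%:E)%E.
Proof.
move=> Xx; rewrite Vstar_series //; apply: lime_le.
  by apply: is_cvg_nneseries => k _ _; exact: Ku_ge0.
by apply: nearW => n; rewrite big_mkord; exact: sum_iter_Kop_le.
Qed.

Lemma Kop_Vstar x : X x ->
  K (Vstar P X F theta U) x = (Vstar P X F theta U x - (U x)%:E)%E.
Proof.
move=> Xx; transitivity (\sum_(k <oo) iter k.+1 K u x)%E.
  rewrite -(Kop_nneseries mu F_meas Dloc_meas F_in measurable_Ku
    (fun k y _ => Ku_ge0 k y) Xx).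
  by apply: eq_integral => t _; rewrite Vstar_series //; exact: F_in.
rewrite Vstar_series // [in RHS]nneseries_recl // -[in RHS]nneseries_addn //= uE //.
rewrite addeAC -EFinD subrr add0e.
by apply: eq_eseriesr => k _; rewrite addn1.
Qed.
End series_solution.
End markov_chain.

Theorem theorem1 (R : realType) (d : nat)
  (dO dT : measure_display) (Omega : measurableType dO) (Theta : measurableType dT)
  (P : probability Omega R) (mu : probability Theta R)
  (X : set (d.-tuple R))
  (F : Theta -> d.-tuple R -> d.-tuple R)
  (theta : nat -> Omega -> Theta)
  (U W : d.-tuple R -> R) :
  (* the random mapping f = F t (t ~ mu) maps X into X *)
  (forall t x, X x -> X (F t x)) ->
  (* measurability of the random mapping and of its local Lipschitz constant *)
  measurable_fun setT (fun p : Theta * d.-tuple R => F p.1 p.2) ->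
  measurable_fun setT
    ((fun p : Theta * d.-tuple R => Dloc X (F p.1) p.2) : _ -> \bar R) ->
  (* f is almost surely locally Lipschitz *)
  {ae mu, forall t, loc_lipschitz X (F t)} ->
  (* f_{n+1} = F (theta n), n >= 0, are iid copies of f *)
  iid_seq P mu theta ->
  (* U : X -> R_+ with inf_X U > 0 *)
  measurable_fun setT U ->
  (exists2 c : R, 0 < c & forall x, X x -> c <= U x) ->
  (* W_* : a non-negative finite solution of K W <= W - U *)
  measurable_fun setT W ->
  (forall x, X x -> 0 <= W x) ->
  (forall x, X x -> (Kop mu X F (fun y => (W y)%:E) x <= (W x - U x)%:E)%E) ->
  (* conclusions *)
  [/\ (forall x, X x -> (Vstar P X F theta U x < +oo)%E),
      (forall x, X x ->
         Kop mu X F (Vstar P X F theta U) x = (Vstar P X F theta U x - (U x)%:E)%E) &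
      (forall V1 V2 : d.-tuple R -> R,
         measurable_fun setT V1 -> measurable_fun setT V2 ->
         (forall x, X x -> 0 <= V1 x) -> (forall x, X x -> 0 <= V2 x) ->
         (exists M : R, forall x, X x -> V1 x <= M) ->
         (exists M : R, forall x, X x -> V2 x <= M) ->
         (forall x, X x -> Kop mu X F (fun y => (V1 y)%:E) x = (V1 x - U x)%:E) ->
         (forall x, X x -> Kop mu X F (fun y => (V2 y)%:E) x = (V2 x - U x)%:E) ->
         forall x, X x -> V1 x = V2 x)].
Proof.
move=> F_in F_meas Dloc_meas _ theta_iid U_meas [c c_gt0 c_le_U] W_meas W_ge0 KW_le.
have U_ge0 x : X x -> 0 <= U x by move=> Xx; exact: le_trans (ltW c_gt0) (c_le_U x Xx).
split.
- move=> x Xx; apply: (le_lt_trans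
    (Vstar_le theta_iid F_meas Dloc_meas F_in U_meas U_ge0 W_meas W_ge0 KW_le Xx)).
  exact: ltey.
- move=> x Xx.
  by have := Kop_Vstar theta_iid F_meas Dloc_meas F_in U_meas U_ge0 Xx; exact.
- move=> V1 V2 mV1 mV2 V1_ge0 V2_ge0 [M1 V1_le] [M2 V2_le] KV1 KV2 x Xx.
  have le_sol :=
    bounded_solution_le F_meas Dloc_meas F_in W_meas W_ge0 KW_le c_gt0 c_le_U.
  apply: le_anti; apply/andP; split.
  + exact: le_sol M1 _ _ mV1 mV2 V1_ge0 V1_le V2_ge0 KV1 KV2 x Xx.
  + exact: le_sol M2 _ _ mV2 mV1 V2_ge0 V2_le V1_ge0 KV2 KV1 x Xx.
Qed.
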